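(* Let ${\mathbf{X}}={\mathbf{U}}_0{\mathbf{V}}_0^T$ with ${\mathbf{U}}_0\in\mathbb{R}_+^{m\times r}$, ${\mathbf{V}}_0\in\mathbb{R}_+^{n\times r}$ of full column rank $r\le\min\{m,n\}$. Let ${\mathbf{A}}_1\in\mathbb{R}^{r\times m}$, ${\mathbf{A}}_2\in\mathbb{R}^{n\times r}$ be such that ${\mathbf{A}}_1{\mathbf{X}}{\mathbf{A}}_2$ is invertible. Let $\lambda_1,\lambda_2>0$, $\sigma_1,\sigma_2\ge0$, and let $(\tilde{\mathbf{U}},\tilde{\mathbf{V}})$ be any minimizer over ${\mathbf{U}}\in\mathbb{R}_+^{m\times r},{\mathbf{V}}\in\mathbb{R}_+^{n\times r}$ of $$L({\mathbf{U}},{\mathbf{V}})+\sigma_1\|\mathbf{1}_m^T({\mathbf{X}}-{\mathbf{U}}{\mathbf{V}}^T)\|_2^2+\sigma_2\|({\mathbf{X}}-{\mathbf{U}}{\mathbf{V}}^T)\mathbf{1}_n\|_2^2,$$ where $L({\mathbf{U}},{\mathbf{V}})=\|{\mathbf{A}}_1({\mathbf{X}}-{\mathbf{U}}{\mathbf{V}}^T)\|_F^2+\|({\mathbf{X}}-{\mathbf{U}}{\mathbf{V}}^T){\mathbf{A}}_2\|_F^2+\lambda_1\|({\mathbf{I}}_m-\mathbf{P}_1){\mathbf{U}}{\mathbf{V}}^T\|_F^2+\lambda_2\|{\mathbf{U}}{\mathbf{V}}^T({\mathbf{I}}_n-\mathbf{P}_2)\|_F^2$, with $\mathbf{P}_1$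 the orthogonal projection onto the column space of ${\mathbf{X}}{\mathbf{A}}_2$ and $\mathbf{P}_2$ the orthogonal projection onto the row space of ${\mathbf{A}}_1{\mathbf{X}}$. Then ${\mathbf{X}}=\tilde{\mathbf{U}}\tilde{\mathbf{V}}^T$.
   Context: $\mathbb{R}_+^{a\times b}$ denotes the set of $a\times b$ entrywise nonnegative matrices; $\mathbf{1}_m\in\mathbb{R}^m$ is the all-ones vector. $\|\cdot\|_F$ is the Frobenius norm and $\|\cdot\|_2$ the Euclidean norm. *)

From HB Require Import structures.
From mathcomp Require Import all_boot all_order all_algebra.
From mathcomp Require Import reals.
Set Implicit Arguments. Unset Strict Implicit. Unset Printing Implicit Defensive.
Import Order.TTheory GRing.Theory Num.Theory.
Local Open Scope ring_scope.

Definition nonneg_mx (R : realType) (a b : nat) (A : 'M[R]_(a, b)) : Prop :=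
  forall i j, 0 <= A i j.

(* squared Frobenius norm (= squared Euclidean norm for row/column vectors) *)
Definition frob2 (R : realType) (a b : nat) (A : 'M[R]_(a, b)) : R :=
  \sum_(i < a) \sum_(j < b) A i j ^+ 2.

(* P is the orthogonal projection onto the column space of M:
   P symmetric, idempotent, and its column space equals that of M
   (column space of M = row space of M^T). *)
Definition orth_proj_col (R : realType) (a k : nat) (P : 'M[R]_a) (M : 'M[R]_(a, k)) : Prop :=
  [/\ P^T = P, P *m P = P & (P^T == M^T)%MS].

Definition orth_proj_row (R : realType) (k a : nat) (P : 'M[R]_a) (M : 'M[R]_(k, a)) : Prop :=
  [/\ P^T = P, P *m P = P & (P == M)%MS].

Definition objective (R : realType) (m n r : nat)
  (X : 'M[R]_(m, n)) (A1 : 'M[R]_(r, m)) (A2 : 'M[R]_(n, r))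
  (P1 : 'M[R]_m) (P2 : 'M[R]_n) (lam1 lam2 sig1 sig2 : R)
  (U : 'M[R]_(m, r)) (V : 'M[R]_(n, r)) : R :=
  let E := X - U *m V^T in
  frob2 (A1 *m E) + frob2 (E *m A2)
  + lam1 * frob2 ((1%:M - P1) *m (U *m V^T))
  + lam2 * frob2 ((U *m V^T) *m (1%:M - P2))
  + sig1 * frob2 ((const_mx 1 : 'M[R]_(1, m)) *m E)
  + sig2 * frob2 (E *m (const_mx 1 : 'M[R]_(n, 1))).

From HB Require Import structures.
From mathcomp Require Import all_boot all_order all_algebra.
From mathcomp Require Import reals.
From mathcomp.algebra_tactics Require Import lra.
Set Implicit Arguments. Unset Strict Implicit. Unset Printing Implicit Defensive.
Import Order.TTheory GRing.Theory Num.Theory.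
Local Open Scope ring_scope.

(* The objective vanishes at (U0, V0), so a minimizer makes every term vanish;
   in particular A1 (X - Y) = 0 and the columns of Y := Ut Vt^T lie in the
   column space of X A2.  Writing Y = X A2 S and X = X A2 T (the latter since
   rank X <= r = rank (A1 X A2) <= rank (X A2)), we get K S = A1 Y = A1 X = K T
   for the invertible K := A1 X A2, hence S = T and Y = X. *)

Lemma frob2_ge0 (R : realType) (a b : nat) (A : 'M[R]_(a, b)) : 0 <= frob2 A.
Proof. by apply: sumr_ge0 => i _; apply: sumr_ge0 => j _; apply: sqr_ge0. Qed.

Lemma frob2_0 (R : realType) (a b : nat) : frob2 (0 : 'M[R]_(a, b)) = 0.
Proof. by apply: big1 => i _; apply: big1 => j _; rewrite mxE expr0n. Qed.

Lemma frob2_eq0 (R : realType) (a b : nat) (A : 'M[R]_(a, b)) :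
  frob2 A = 0 -> A = 0.
Proof.
move=> h; apply/matrixP => i j; rewrite mxE.
have hi := @psumr_eq0P _ _ _ _ (fun i _ => sumr_ge0 _ (fun j _ => sqr_ge0 (A i j))) h i isT.
have := @psumr_eq0P _ _ _ _ (fun j _ => sqr_ge0 (A i j)) hi j isT.
by move/eqP; rewrite sqrf_eq0 => /eqP.
Qed.

Section MatrixSketch.
Variable F : fieldType.

Lemma submx_mulmx_rank (k m n : nat) (B : 'M[F]_(k, m)) (X : 'M[F]_(m, n)) :
  (\rank X <= \rank (B *m X))%N -> (X <= B *m X)%MS.
Proof.
move=> hr; have [_ <-] := mxrank_leqif_sup (submxMl B X).
by rewrite eqn_leq hr mxrankM_maxr.
Qed.

Lemma proj_mulmx_id (a b : nat) (P : 'M[F]_a) (Z : 'M[F]_(a, b)) :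
  P *m P = P -> (Z^T <= P^T)%MS -> P *m Z = Z.
Proof.
move=> Pidem /submxP[D hD].
have -> : Z = P *m D^T by rewrite -[Z]trmxK hD trmx_mul trmxK.
by rewrite mulmxA Pidem.
Qed.

Lemma mulmx_proj_id (a b : nat) (P : 'M[F]_b) (Z : 'M[F]_(a, b)) :
  P *m P = P -> (Z <= P)%MS -> Z *m P = Z.
Proof. by move=> Pidem /submxP[D ->]; rewrite -mulmxA Pidem. Qed.

Variables (m n r : nat) (X : 'M[F]_(m, n)) (A1 : 'M[F]_(r, m)) (A2 : 'M[F]_(n, r)).
Hypothesis (unit_sketch : A1 *m X *m A2 \in unitmx) (rankX : (\rank X <= r)%N).

Let rank_sketch : \rank (A1 *m X *m A2) = r.
Proof. exact: mxrank_unit. Qed.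

Lemma row_submx_sketch : (X <= A1 *m X)%MS.
Proof.
apply: submx_mulmx_rank; apply: leq_trans rankX _.
by rewrite -{1}rank_sketch mxrankM_maxl.
Qed.

Lemma col_submx_sketch : (X^T <= (X *m A2)^T)%MS.
Proof.
rewrite trmx_mul; apply: submx_mulmx_rank; rewrite -trmx_mul !mxrank_tr.
by apply: leq_trans rankX _; rewrite -{1}rank_sketch -mulmxA mxrankM_maxr.
Qed.

Lemma eq_of_sketch (Y : 'M[F]_(m, n)) :
  A1 *m Y = A1 *m X -> (Y^T <= (X *m A2)^T)%MS -> Y = X.
Proof.
have col_factor (Z : 'M[F]_(m, n)) :
    (Z^T <= (X *m A2)^T)%MS -> exists T : 'M[F]_(r, n), Z = X *m A2 *m T.
  by case/submxP=> D hD; exists D^T; rewrite -[Z]trmxK hD trmx_mul trmxK.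
move=> A1Y /col_factor[S eYS]; have [T eXT] := col_factor X col_submx_sketch.
have KST : A1 *m X *m A2 *m S = A1 *m X *m A2 *m T.
  by rewrite -!mulmxA !(mulmxA X) -eYS -eXT.
by rewrite eYS {2}eXT (can_inj (mulKmx unit_sketch) KST).
Qed.

End MatrixSketch.

Section Objective.
Variables (R : realType) (m n r : nat).
Variables (X : 'M[R]_(m, n)) (A1 : 'M[R]_(r, m)) (A2 : 'M[R]_(n, r)).
Variables (P1 : 'M[R]_m) (P2 : 'M[R]_n) (lam1 lam2 sig1 sig2 : R).

Lemma objective_eq0 (U : 'M[R]_(m, r)) (V : 'M[R]_(n, r)) :
  P1 *m X = X -> X *m P2 = X -> U *m V^T = X ->
  objective X A1 A2 P1 P2 lam1 lam2 sig1 sig2 U V = 0.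
Proof.
move=> P1X XP2 eUV; rewrite /objective eUV subrr !(mulmx0, mul0mx).
by rewrite mulmxBl mulmxBr mul1mx mulmx1 P1X XP2 subrr !frob2_0 !mulr0 !addr0.
Qed.

Lemma objective_le0 (U : 'M[R]_(m, r)) (V : 'M[R]_(n, r)) :
  0 < lam1 -> 0 <= lam2 -> 0 <= sig1 -> 0 <= sig2 ->
  objective X A1 A2 P1 P2 lam1 lam2 sig1 sig2 U V <= 0 ->
  A1 *m (X - U *m V^T) = 0 /\ (1%:M - P1) *m (U *m V^T) = 0.
Proof.
move=> l1 l2 s1 s2; rewrite /objective.
set a := frob2 (A1 *m _); set c := frob2 ((1%:M - P1) *m _).
have ha : 0 <= a := frob2_ge0 _.
have hb := frob2_ge0 ((X - U *m V^T) *m A2).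
have hc : 0 <= lam1 * c by rewrite mulr_ge0 ?frob2_ge0 ?ltW.
have hd := mulr_ge0 l2 (frob2_ge0 (U *m V^T *m (1%:M - P2))).
have he := mulr_ge0 s1 (frob2_ge0 ((const_mx 1 : 'M[R]_(1, m)) *m (X - U *m V^T))).
have hf := mulr_ge0 s2 (frob2_ge0 ((X - U *m V^T) *m (const_mx 1 : 'M[R]_(n, 1)))).
move=> hle; have a0 : a = 0 by lra.
have /eqP : lam1 * c = 0 by lra.
by rewrite mulf_eq0 (gt_eqF l1) /= => /eqP /frob2_eq0 c0; split; [apply: frob2_eq0|].
Qed.

End Objective.

Theorem mainTheorem5 (R : realType) (m n r : nat)
  (U0 : 'M[R]_(m, r)) (V0 : 'M[R]_(n, r))
  (A1 : 'M[R]_(r, m)) (A2 : 'M[R]_(n, r))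
  (P1 : 'M[R]_m) (P2 : 'M[R]_n)
  (lam1 lam2 sig1 sig2 : R)
  (Ut : 'M[R]_(m, r)) (Vt : 'M[R]_(n, r)) :
  nonneg_mx U0 -> nonneg_mx V0 ->
  \rank U0 = r -> \rank V0 = r -> (r <= minn m n)%N ->
  A1 *m (U0 *m V0^T) *m A2 \in unitmx ->
  0 < lam1 -> 0 < lam2 -> 0 <= sig1 -> 0 <= sig2 ->
  orth_proj_col P1 ((U0 *m V0^T) *m A2) ->
  orth_proj_row P2 (A1 *m (U0 *m V0^T)) ->
  nonneg_mx Ut -> nonneg_mx Vt ->
  (forall (U : 'M[R]_(m, r)) (V : 'M[R]_(n, r)), nonneg_mx U -> nonneg_mx V ->
     objective (U0 *m V0^T) A1 A2 P1 P2 lam1 lam2 sig1 sig2 Ut Vt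
     <= objective (U0 *m V0^T) A1 A2 P1 P2 lam1 lam2 sig1 sig2 U V) ->
  U0 *m V0^T = Ut *m Vt^T.
Proof.
move=> nU0 nV0 _ _ _ Ku l1 l2 s1 s2 [_ P1i /andP[P1sub P1sup]] [_ P2i /andP[_ P2sup]] _ _ hmin.
set X := U0 *m V0^T in Ku P1sub P1sup P2sup hmin *.
have rX : (\rank X <= r)%N by apply: leq_trans (mxrankM_maxr _ _) (rank_leq_row _).
have P1X : P1 *m X = X.
  by apply: proj_mulmx_id => //; apply: submx_trans (col_submx_sketch Ku rX) P1sup.
have XP2 : X *m P2 = X.
  by apply: mulmx_proj_id => //; apply: submx_trans (row_submx_sketch Ku rX) P2sup.
have := hmin U0 V0 nU0 nV0; rewrite [X in _ <= X]objective_eq0 //.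
case/(objective_le0 l1 (ltW l2) s1 s2) => A1XY /eqP.
rewrite mulmxBl mul1mx subr_eq0 => /eqP P1Y.
have colY : ((Ut *m Vt^T)^T <= P1^T)%MS by rewrite P1Y [(P1 *m _)^T]trmx_mul submxMl.
symmetry; apply: (eq_of_sketch Ku rX _ (submx_trans colY P1sub)).
by apply/eqP; rewrite eq_sym -subr_eq0 -mulmxBr A1XY.
Qed.
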